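(* Let $\Gamma$ be a profinite group, let $Z_0$ be a finite $\Gamma$-set with $|Z_0|=n\geq 1$, and let $\pi\colon Z\to Z_0$ be a $\Gamma$-covering of degree $2$, with canonical involution $\sigma$ of $Z$. Let $\delta\colon C(Z/Z_0)\to\Delta(Z)$ be the canonical map, and let $\iota$ denote the nontrivial automorphism of the two-element set $\Delta(Z)$. Then: (1) for sections $\omega,\omega'\in C(Z/Z_0)$ we have $\delta(\omega)=\delta(\omega')$ if and only if $|\omega\cap\omega'|\equiv n \pmod 2$; (2) for every section $\omega$, writing $\underline{\sigma}(\omega)=Z\setminus\omega$ for its complement, we have $\delta(\underline{\sigma}(\omega))=\delta(\omega)$ if $n$ is even and $\delta(\underline{\sigma}(\omega))=\iota(\delta(\omega))$ if $n$ is odd.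
   Context: A (finite) $\Gamma$-set is a finite set with a continuous left action of $\Gamma$ (discrete topology). A $\Gamma$-covering of degree $2$ is a $\Gamma$-equivariant map $\pi\colon Z\to Z_0$ all of whose fibers have exactly $2$ elements; its canonical involution $\sigma\colon Z\to Z$ interchanges the two elements of each fiber. The set of sections $C(Z/Z_0)$ is the set of subsets $\{z_1,\dots,z_n\}\subset Z$ with $\{\pi(z_1),\dots,\pi(z_n)\}=Z_0$ (not necessarily $\Gamma$-stable); $\Gamma$ acts on it. For a $\Gamma$-set $X$ with $|X|=m\geq 2$, let $\Sigma_m(X)$ be the set of $m$-tuples $(x_1,\dots,x_m)$ with $X=\{x_1,\dots,x_m\}$, with the right action of the symmetric group $\mathfrak S_m$; the discriminant $\Delta(X)=\Sigma_m(X)/\mathfrak A_m$ is the two-element $\Gamma$-set of orbits of the alternating group. The map $\delta\colon C(Z/Z_0)\to\Delta(Z)$ sends a section $\{z_1,\dots,z_n\}$ to the $\mathfrak A_{2n}$-orbit of $(z_1,\dots,z_n,\sigma(z_1),\dots,\sigma(z_n))$. *)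

From mathcomp Require Import all_boot all_fingroup.
Set Implicit Arguments. Unset Strict Implicit. Unset Printing Implicit Defensive.

Section Discriminant.
Variables (Z Z0 : finType) (pi : Z -> Z0).

Definition cov_sigma (z : Z) : Z :=
  odflt z [pick z' | (pi z' == pi z) && (z' != z)].

Definition is_section (w : {set Z}) : bool :=
  (pi @: w == [set: Z0]) && (#|w| == #|Z0|).

Definition Sigma : {set {ffun 'I_#|Z| -> Z}} :=
  [set f : {ffun 'I_#|Z| -> Z} | injectiveb f].

Definition sigma_act (f : {ffun 'I_#|Z| -> Z}) (p : {perm 'I_#|Z|})
  : {ffun 'I_#|Z| -> Z} := [ffun i => f (p i)].

Definition alt_orbit (f : {ffun 'I_#|Z| -> Z}) : {set {ffun 'I_#|Z| -> Z}} :=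
  [set sigma_act f p | p in [set p : {perm 'I_#|Z|} | ~~ odd_perm p]].

Definition Delta : {set {set {ffun 'I_#|Z| -> Z}}} := alt_orbit @: Sigma.

(* nontrivial automorphism of the two-element set Delta(Z):
   an orbit goes to the other orbit, i.e. its complement in Sigma_m(Z) *)
Definition disc_iota (c : {set {ffun 'I_#|Z| -> Z}}) : {set {ffun 'I_#|Z| -> Z}} :=
  Sigma :\: c.

Definition section_tuple (w : {set Z}) : {ffun 'I_#|Z| -> Z} :=
  [ffun i : 'I_#|Z| => nth (enum_val i) (enum w ++ map cov_sigma (enum w)) i].

Definition delta (w : {set Z}) : {set {ffun 'I_#|Z| -> Z}} :=
  alt_orbit (section_tuple w).

End Discriminant.

(* Order a section w as (w_1, ..., w_n) and compare the tuple
   (w_1, ..., w_n, sigma w_1, ..., sigma w_n) with the one of another section w'.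
   Folding w' onto w by sigma reorders the first half by some tau and the second
   half by the same tau, an even permutation; then one transposes the positions
   j and n + j exactly for the n - |w ∩ w'| indices where w' and w differ.  So the
   two tuples differ by a permutation of parity |w' \ w| = n - |w ∩ w'|, and they
   lie in the same A_2n-orbit iff this is even.  The complement of w is again a
   section, with |~w \ w| = n. *)

From mathcomp Require Import all_boot all_fingroup.
Set Implicit Arguments. Unset Strict Implicit. Unset Printing Implicit Defensive.

Local Open Scope group_scope.

Lemma odd_perm_char (T : finType) (g : {perm T} -> bool) :
  {morph g : s t / s * t >-> s (+) t} ->
  (forall x y : T, x != y -> g (tperm x y)) ->
  g =1 @odd_perm T.
Proof.
move=> gM g_tperm s; have [ts -> dts] := prod_tpermP s.
rewrite odd_perm_prod //; elim: ts dts => [_|t ts IHts /andP[dt dts]].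
  by rewrite big_nil; have := gM 1 1; rewrite mulg1 addbb.
by rewrite big_cons gM g_tperm // IHts.
Qed.

Lemma odd_cast_perm m n (e : m = n) (s : 'S_m) :
  odd_perm (cast_perm e s) = odd_perm s.
Proof. by case: n / e; rewrite cast_perm_id. Qed.

Section HalvesPerm.
Variables m n : nat.

Lemma lshift_neq_rshift (j : 'I_m) (k : 'I_n) : lshift n j != rshift m k.
Proof. by rewrite -val_eqE /= neq_ltn (leq_trans (ltn_ord j) (leq_addr k m)). Qed.

Definition perm_sum_fun (s : 'S_m) (t : 'S_n) (i : 'I_(m + n)) : 'I_(m + n) :=
  unsplit (match split i with inl j => inl (s j) | inr k => inr (t k) end).

Lemma perm_sum_fun_inj s t : injective (perm_sum_fun s t).
Proof.
move=> i i' /(can_inj unsplitK) e; apply: (can_inj (@splitK m n)).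
by move: e; case: split => j; case: split => j' // [] /perm_inj ->.
Qed.

Definition perm_sum s t : 'S_(m + n) := perm (@perm_sum_fun_inj s t).

Lemma perm_sum_lshift s t j : perm_sum s t (lshift n j) = lshift n (s j).
Proof. by rewrite permE /perm_sum_fun (unsplitK (inl _ j)). Qed.

Lemma perm_sum_rshift s t k : perm_sum s t (rshift m k) = rshift m (t k).
Proof. by rewrite permE /perm_sum_fun (unsplitK (inr _ k)). Qed.

Lemma perm_sumM s1 t1 s2 t2 :
  perm_sum (s1 * s2) (t1 * t2) = perm_sum s1 t1 * perm_sum s2 t2.
Proof.
apply/permP => i; rewrite permM.
by case: (split_ordP i) => j ->; rewrite ?perm_sum_lshift ?perm_sum_rshift permM.
Qed.

Lemma perm_sum_tperm_l x y :
  perm_sum (tperm x y) 1 = tperm (lshift n x) (lshift n y).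
Proof.
apply/permP => i; case: (split_ordP i) => j ->.
  by rewrite perm_sum_lshift (inj_tperm _ _ _ (@lshift_inj m n)).
by rewrite perm_sum_rshift perm1 tpermD // lshift_neq_rshift.
Qed.

Lemma perm_sum_tperm_r x y :
  perm_sum 1 (tperm x y) = tperm (rshift m x) (rshift m y).
Proof.
apply/permP => i; case: (split_ordP i) => j ->.
  by rewrite perm_sum_lshift perm1 tpermD // eq_sym lshift_neq_rshift.
by rewrite perm_sum_rshift (inj_tperm _ _ _ (@rshift_inj m n)).
Qed.

Lemma odd_perm_sum s t : odd_perm (perm_sum s t) = odd_perm s (+) odd_perm t.
Proof.
have -> : perm_sum s t = perm_sum s 1 * perm_sum 1 t by rewrite -perm_sumM mulg1 mul1g.
rewrite odd_permM; congr (_ (+) _).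
  apply: (@odd_perm_char _ (fun u => odd_perm (perm_sum u 1))) => [u v|x y nxy].
    by rewrite -odd_permM -perm_sumM mulg1.
  by rewrite perm_sum_tperm_l odd_tperm (inj_eq (@lshift_inj m n)).
apply: (@odd_perm_char _ (fun u => odd_perm (perm_sum 1 u))) => [u v|x y nxy].
  by rewrite -odd_permM -perm_sumM mulg1.
by rewrite perm_sum_tperm_r odd_tperm (inj_eq (@rshift_inj m n)).
Qed.

End HalvesPerm.

Lemma prod_tperm_disjointE (I : eqType) (T : finType) (a b : I -> T) (s : seq I) k :
  injective a -> injective b -> (forall i j, a i != b j) -> uniq s ->
  (\prod_(j <- s) tperm (a j) (b j)) (a k) = if k \in s then b k else a k.
Proof.
move=> a_inj b_inj ab s_uniq; elim/last_ind: s s_uniq => [|s c IHs].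
  by rewrite big_nil perm1.
rewrite rcons_uniq => /andP[c_s s_uniq]; rewrite big_rcons permM IHs // mem_rcons inE.
have [->|nkc] := eqVneq k c; first by rewrite (negPf c_s) tpermL.
case: ifP => _; rewrite tpermD //.
- by rewrite (inj_eq b_inj) eq_sym.
- by rewrite (inj_eq a_inj) eq_sym.
- by rewrite eq_sym.
Qed.

Section SwapHalves.
Variable n : nat.

Definition swap_halves (s : seq 'I_n) : 'S_(n + n) :=
  \prod_(j <- s) tperm (lshift n j) (rshift n j).

Lemma odd_swap_halves s : odd_perm (swap_halves s) = odd (size s).
Proof.
rewrite /swap_halves -(big_map (fun j => (lshift n j, rshift n j)) xpredT
  (fun t => tperm t.1 t.2)) odd_perm_prod ?size_map //.
by apply/allP => _ /mapP[j _ ->]; apply: lshift_neq_rshift.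
Qed.

Lemma swap_halves_lshift s k : uniq s ->
  swap_halves s (lshift n k) = if k \in s then rshift n k else lshift n k.
Proof.
apply: prod_tperm_disjointE; [exact: lshift_inj | exact: rshift_inj |].
exact: lshift_neq_rshift.
Qed.

Lemma swap_halves_rshift s k : uniq s ->
  swap_halves s (rshift n k) = if k \in s then lshift n k else rshift n k.
Proof.
rewrite /swap_halves; under eq_bigr do rewrite tpermC.
apply: prod_tperm_disjointE; [exact: rshift_inj | exact: lshift_inj |].
by move=> i j; rewrite eq_sym lshift_neq_rshift.
Qed.
End SwapHalves.

Section DoubleSeq.
Variables (T : Type) (sg : T -> T) (n : nat) (x0 : T).
Hypothesis sgK : involutive sg.

Definition double_nth (u : seq T) (i : 'I_(n + n)) : T := nth x0 (u ++ map sg u) i.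

Lemma double_nth_lshift u j : size u = n -> double_nth u (lshift n j) = nth x0 u j.
Proof. by move=> u_n; rewrite /double_nth /= nth_cat u_n ltn_ord. Qed.

Lemma double_nth_rshift u j : size u = n -> double_nth u (rshift n j) = sg (nth x0 u j).
Proof.
move=> u_n; rewrite /double_nth /= nth_cat u_n ltnNge leq_addr /= addKn.
by rewrite (nth_map x0) // u_n.
Qed.

Lemma double_nth_perm u v (t : 'S_n) (s : seq 'I_n) :
  size u = n -> size v = n -> uniq s ->
  (forall j : 'I_n, nth x0 v j = if j \in s then sg (nth x0 u (t j)) else nth x0 u (t j)) ->
  forall i, double_nth v i = double_nth u ((swap_halves s * perm_sum t t) i).
Proof.
move=> u_n v_n s_uniq vE i; rewrite permM.
case: (split_ordP i) => j ->{i}.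
  rewrite swap_halves_lshift // double_nth_lshift // vE.
  by case: ifP => _;
    rewrite ?perm_sum_lshift ?perm_sum_rshift ?double_nth_lshift ?double_nth_rshift.
rewrite swap_halves_rshift // double_nth_rshift // vE.
by case: ifP => _;
  rewrite ?perm_sum_lshift ?perm_sum_rshift ?double_nth_lshift ?double_nth_rshift ?sgK.
Qed.

End DoubleSeq.

Section AltOrbit.
Variable Z : finType.
Implicit Types (f x : {ffun 'I_#|Z| -> Z}) (p r : 'S_#|Z|).

Lemma sigma_actM f p r : sigma_act (sigma_act f p) r = sigma_act f (r * p).
Proof. by apply/ffunP => i; rewrite !ffunE permM. Qed.

Lemma injective_sigma_act f p : injective f -> injective (sigma_act f p).
Proof. by move=> f_inj i j; rewrite !ffunE => /f_inj/perm_inj. Qed.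

Lemma sigma_act_inj f : injective f -> injective (sigma_act f).
Proof.
move=> f_inj p r /ffunP pr; apply/permP => i.
by apply: f_inj; have := pr i; rewrite !ffunE.
Qed.

Lemma mem_alt_orbit_act f r : injective f ->
  (sigma_act f r \in alt_orbit f) = ~~ odd_perm r.
Proof.
move=> f_inj; apply/imsetP/idP => [[q]|r_even]; last by exists r; rewrite ?inE.
by rewrite inE => q_even /(sigma_act_inj f_inj) ->.
Qed.

Lemma mem_alt_orbit f : f \in alt_orbit f.
Proof.
apply/imsetP; exists 1; first by rewrite inE odd_perm1.
by apply/ffunP => i; rewrite ffunE perm1.
Qed.

Lemma alt_orbit_neq_setD f : alt_orbit f != Sigma Z :\: alt_orbit f.
Proof.
by apply/eqP => eq_f; have := mem_alt_orbit f; rewrite {1}eq_f in_setD mem_alt_orbit.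
Qed.

Lemma alt_orbit_Sigma f : injective f -> alt_orbit f \subset Sigma Z.
Proof.
move=> f_inj; apply/subsetP => _ /imsetP[r _ ->].
by rewrite inE; apply/injectiveP/injective_sigma_act.
Qed.

Lemma Sigma_act f x : injective f -> x \in Sigma Z -> exists r, x = sigma_act f r.
Proof.
move=> f_inj; rewrite inE => /injectiveP x_inj.
have [g fK gK] : bijective f by apply: inj_card_bij; rewrite ?card_ord.
have gx_inj : injective (g \o x) by move=> i j /(can_inj gK)/x_inj.
by exists (perm gx_inj); apply/ffunP => i; rewrite ffunE permE /= gK.
Qed.

Lemma alt_orbit_act f p : injective f ->
  alt_orbit (sigma_act f p) = if odd_perm p then Sigma Z :\: alt_orbit f else alt_orbit f.
Proof.
move=> f_inj; apply/setP => x.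
have [x_Sigma|x_notSigma] := boolP (x \in Sigma Z); last first.
  have x_notin (g : {ffun 'I_#|Z| -> Z}) : injective g -> x \notin alt_orbit g.
    by move/alt_orbit_Sigma/subsetP/(_ x)/contra; apply.
  rewrite (negPf (x_notin _ (injective_sigma_act (p := p) f_inj))).
  by case: (odd_perm p);
    rewrite ?in_setD ?(negPf x_notSigma) ?andbF ?(negPf (x_notin _ f_inj)).
have [r xE] := Sigma_act f_inj x_Sigma; rewrite xE in x_Sigma *.
have -> : sigma_act f r = sigma_act (sigma_act f p) (r * p^-1) by rewrite sigma_actM mulgKV.
rewrite mem_alt_orbit_act; last exact: injective_sigma_act.
rewrite sigma_actM mulgKV odd_permM odd_permV.
by case: (odd_perm p); rewrite ?in_setD ?x_Sigma mem_alt_orbit_act ?addbT ?addbF ?andbT.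
Qed.

End AltOrbit.

Lemma count_enum (T : finType) (A : {pred T}) (P : pred T) :
  count P (enum A) = #|[predI A & P]|.
Proof.
rewrite cardE /enum_mem -size_filter -filter_predI.
by congr size; apply: eq_filter => x; rewrite !inE andbC.
Qed.

Lemma count_nth_ord (T : Type) (x0 : T) (P : pred T) n (s : seq T) : size s = n ->
  count (fun j : 'I_n => P (nth x0 s j)) (enum 'I_n) = count P s.
Proof.
by move=> s_n; rewrite -(count_map _ P) -[in RHS](mkseq_nth x0 s) s_n /mkseq
  -val_enum_ord -map_comp.
Qed.

Lemma perm_eq_nth_perm (T : eqType) (x0 : T) n (u v : seq T) :
  perm_eq u v -> size v = n ->
  exists tau : 'S_n, forall j : 'I_n, nth x0 u j = nth x0 v (tau j).
Proof.
move=> uv /eqP v_n; have /tuple_permP[tau uE] : perm_eq u (Tuple v_n) by [].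
by exists tau => j; rewrite uE -[nth x0 _ j](tnth_nth x0) tnth_mktuple (tnth_nth x0).
Qed.

Section Covering.
Variables (Z Z0 : finType) (pi : Z -> Z0).
Hypothesis pi_fiber2 : forall z0 : Z0, #|[set z | pi z == z0]| = 2.
Local Notation sg := (cov_sigma pi).
Local Notation n := #|Z0|.

Lemma cov_sigma_spec z : pi (sg z) = pi z /\ sg z != z.
Proof.
rewrite /cov_sigma; case: pickP => [z' /andP[/eqP-> ->] // | no_other].
have : [set y | pi y == pi z] \subset [set z].
  apply/subsetP => y; rewrite !inE => y_fib.
  by have := no_other y; rewrite y_fib => /negbFE.
by move/subset_leq_card; rewrite pi_fiber2 cards1.
Qed.

Lemma cov_sigma_pi z : pi (sg z) = pi z. Proof. by case: (cov_sigma_spec z). Qed.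
Lemma cov_sigma_neq z : sg z != z. Proof. by case: (cov_sigma_spec z). Qed.

Lemma fiber_cov_sigma y z : pi y = pi z -> y != z -> y = sg z.
Proof.
move=> yz_pi nyz; apply/eqP; apply: contraTT isT => nysz.
have : sg z |: (y |: [set z]) \subset [set x | pi x == pi z].
  by apply/subsetP => x; rewrite !inE => /or3P [] /eqP ->; rewrite ?yz_pi ?cov_sigma_pi.
move/subset_leq_card; rewrite pi_fiber2 !cardsU1 cards1 !inE eq_sym (negPf nysz).
by rewrite (negPf (cov_sigma_neq z)) (negPf nyz).
Qed.

Lemma cov_sigmaK : involutive sg.
Proof.
move=> z; apply/esym/fiber_cov_sigma; first by rewrite !cov_sigma_pi.
by rewrite eq_sym cov_sigma_neq.
Qed.

Section Sections.
Variable w : {set Z}.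
Hypothesis w_sec : is_section pi w.

Lemma section_pi_image : pi @: w = [set: Z0]. Proof. by case/andP: w_sec => /eqP. Qed.
Lemma card_section : #|w| = n. Proof. by case/andP: w_sec => _ /eqP. Qed.

Lemma section_pi_inj : {in w &, injective pi}.
Proof. by apply/imset_injP; rewrite section_pi_image cardsT card_section. Qed.

Lemma cov_sigma_notin a : a \in w -> sg a \notin w.
Proof.
move=> a_w; apply: contra (cov_sigma_neq a) => sa_w.
by rewrite (section_pi_inj sa_w a_w (cov_sigma_pi a)).
Qed.

Lemma cov_sigma_in b : b \notin w -> sg b \in w.
Proof.
move=> b_w; have /imsetP[a a_w ab_pi] : pi b \in pi @: w by rewrite section_pi_image inE.
by rewrite -(fiber_cov_sigma (esym ab_pi)) //; apply: contraNneq b_w => <-.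
Qed.

Lemma setC_section : ~: w = sg @: w.
Proof.
apply/setP => z; rewrite inE; apply/idP/imsetP => [z_w | [a a_w ->]].
  by exists (sg z); rewrite ?cov_sigmaK ?cov_sigma_in.
exact: cov_sigma_notin.
Qed.

Lemma card_setC_section : #|~: w| = n.
Proof. by rewrite setC_section card_imset ?card_section //; apply: can_inj cov_sigmaK. Qed.

Lemma is_section_setC : is_section pi (~: w).
Proof.
rewrite /is_section card_setC_section eqxx andbT setC_section -imset_comp.
by rewrite -section_pi_image; apply/eqP/eq_imset => z; apply: cov_sigma_pi.
Qed.

Lemma card_cover : #|Z| = n + n.
Proof. by rewrite -(cardsC w) card_section card_setC_section. Qed.

Lemma section_tupleE (v : {set Z}) x0 i : #|v| = n ->
  section_tuple pi v i = double_nth sg x0 (enum v) (cast_ord card_cover i).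
Proof.
move=> v_n; rewrite ffunE; apply: set_nth_default.
by rewrite size_cat size_map -cardE v_n -card_cover.
Qed.

Lemma section_tuple_inj : injective (section_tuple pi w).
Proof.
set L := enum w ++ map sg (enum w).
have L_size : size L = #|Z| by rewrite size_cat size_map -cardE card_section card_cover.
have L_uniq : uniq L.
  rewrite cat_uniq enum_uniq (map_inj_uniq (can_inj cov_sigmaK)) enum_uniq andbT /=.
  by apply/hasPn => _ /mapP[a a_w ->]; rewrite mem_enum cov_sigma_notin // -mem_enum.
move=> i j; rewrite !ffunE -/L (set_nth_default (enum_val i) _ (_ : j < size L)) ?L_size //.
by move/eqP; rewrite nth_uniq ?L_size // => /eqP/val_inj.
Qed.

End Sections.

Lemma perm_eq_section_fold w w' : is_section pi w -> is_section pi w' ->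
  perm_eq [seq if z \in w then z else sg z | z <- enum w'] (enum w).
Proof.
move=> w_sec w'_sec; set fold := fun z => if z \in w then z else sg z.
have pi_fold z : pi (fold z) = pi z by rewrite /fold; case: ifP; rewrite ?cov_sigma_pi.
have fold_uniq : uniq (map fold (enum w')).
  rewrite map_inj_in_uniq ?enum_uniq // => x y; rewrite !mem_enum => x_w' y_w' xy.
  by apply: (section_pi_inj w'_sec) => //; rewrite -pi_fold xy pi_fold.
have fold_sub : {subset map fold (enum w') <= enum w}.
  move=> _ /mapP[z _ ->]; rewrite mem_enum /fold.
  by case: ifPn => // /(cov_sigma_in w_sec).
have fold_size : size (enum w) <= size (map fold (enum w')).
  by rewrite size_map -!cardE !card_section.
have [_ fold_eq] := uniq_min_size fold_uniq fold_sub fold_size.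
exact: uniq_perm (enum_uniq _) fold_eq.
Qed.

Lemma section_tuple_act w w' : 0 < n -> is_section pi w -> is_section pi w' ->
  exists p, section_tuple pi w' = sigma_act (section_tuple pi w) p /\
            odd_perm p = odd #|w' :\: w|.
Proof.
move=> n_gt0 w_sec w'_sec.
(* [n_gt0] only provides a default element for [nth]. *)
have [z0 _] : exists z0, z0 \in w by apply/card_gt0P; rewrite (card_section w_sec).
set s := enum w; set s' := enum w'.
have s_n : size s = n by rewrite -cardE card_section.
have s'_n : size s' = n by rewrite -cardE card_section.
have [tau tauE] := perm_eq_nth_perm z0 (perm_eq_section_fold w_sec w'_sec) s_n.
set flips := [seq j : 'I_n <- enum 'I_n | nth z0 s' j \notin w].
have s'E (j : 'I_n) :
    nth z0 s' j = if j \in flips then sg (nth z0 s (tau j)) else nth z0 s (tau j).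
  rewrite mem_filter mem_enum andbT -tauE (nth_map z0) ?s'_n //.
  by case: (boolP (nth z0 s' j \in w)) => //= _; rewrite cov_sigmaK.
exists (cast_perm (esym (card_cover w_sec)) (swap_halves flips * perm_sum tau tau)); split.
  apply/ffunP => i; rewrite [RHS]ffunE !(section_tupleE w_sec z0) ?card_section //.
  rewrite cast_permE cast_ordKV -(double_nth_perm cov_sigmaK s_n s'_n _ s'E).
    by congr double_nth; apply: val_inj.
  exact/filter_uniq/enum_uniq.
rewrite odd_cast_perm odd_permM odd_swap_halves odd_perm_sum addbb addbF.
rewrite size_filter (count_nth_ord z0 (fun z => z \notin w)) // count_enum.
by congr odd; apply: eq_card => z; rewrite !inE andbC.
Qed.

Lemma delta_section w w' : 0 < n -> is_section pi w -> is_section pi w' ->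
  delta pi w' = if odd #|w' :\: w| then disc_iota (delta pi w) else delta pi w.
Proof.
move=> n_gt0 w_sec w'_sec; rewrite /delta /disc_iota.
have [p [-> <-]] := section_tuple_act n_gt0 w_sec w'_sec.
exact/alt_orbit_act/section_tuple_inj.
Qed.

End Covering.

Theorem proposition2p1 (Z Z0 : finType) (pi : Z -> Z0)
  (Hcov : forall z0 : Z0, #|[set z | pi z == z0]| = 2)
  (Hn : 0 < #|Z0|) :
  (forall w w' : {set Z}, is_section pi w -> is_section pi w' ->
     (delta pi w = delta pi w' <-> #|w :&: w'| = #|Z0| %[mod 2]))
  /\
  (forall w : {set Z}, is_section pi w ->
     delta pi (~: w) =
       (if ~~ odd #|Z0| then delta pi w else disc_iota (delta pi w))).
Proof.
split => [w w' w_sec w'_sec | w w_sec].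
  rewrite (delta_section Hcov Hn w_sec w'_sec) -(card_section w'_sec) -(cardsID w w') setIC.
  rewrite !modn2 oddD; case: (odd #|w' :\: w|); rewrite ?addbT ?addbF //.
  split=> [eq_delta | ]; last by case: (odd _).
  have := alt_orbit_neq_setD (section_tuple pi w).
  by rewrite -[X in X != _]/(delta pi w) eq_delta eqxx.
rewrite (delta_section Hcov Hn w_sec (is_section_setC Hcov w_sec)).
by rewrite setDE setIid (card_setC_section Hcov w_sec) if_neg.
Qed.
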